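(* Let $0<q<1$ and $t>0$, let $n\ge 0$ be an integer, and let $u\in\mathbb{C}\setminus\{0\}$. Put $\sinh\xi_n:=\frac{q^{-nt}u-q^{nt}u^{-1}}{2}$. Then $$\left|h_n(\sinh\xi_n\,|\,q)\right|\le \frac{|u|^n}{q^{n^2t}}\,A_q\!\left(-\frac{q^{n(2t-1)}}{|u|^2}\right).$$
   Context: Notation: $(a;q)_0:=1$, $(a;q)_k:=\prod_{j=0}^{k-1}(1-aq^j)$, $(a;q)_\infty:=\prod_{j=0}^{\infty}(1-aq^j)$, and $\left[\begin{array}{c}n\\k\end{array}\right]_q:=\frac{(q;q)_n}{(q;q)_k(q;q)_{n-k}}$. Ramanujan's function is the entire function $A_q(z):=\sum_{k=0}^{\infty}\frac{q^{k^2}}{(q;q)_k}(-z)^k$. The Ismail–Masson ($q^{-1}$-Hermite) polynomial $h_n(x|q)$ is the polynomial of degree $n$ in $x$ determined by $h_n\!\left(\tfrac{v-v^{-1}}{2}\,\middle|\,q\right)=\sum_{k=0}^{n}\left[\begin{array}{c}n\\k\end{array}\right]_q q^{k(k-n)}(-1)^k v^{n-2k}$ for all $v\in\mathbb{C}\setminus\{0\}$ (i.e. $h_n(\sinh\xi|q)=\sum_{k=0}^n \left[\begin{array}{c}n\\k\end{array}\right]_q q^{k(k-n)}(-1)^ke^{(n-2k)\xi}$). In the claim, $h_n(\sinh\xi_n|q)$ means $h_n$ evaluated at $x=\frac{q^{-nt}u-q^{nt}u^{-1}}{2}$. *)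

From Stdlib Require Import Reals ClassicalEpsilon.
From Coquelicot Require Import Coquelicot.
Open Scope R_scope.

Fixpoint qpoch (a q : R) (k : nat) : R :=
  match k with
  | O => 1
  | S k' => qpoch a q k' * (1 - a * q ^ k')
  end.

Definition qbinom (q : R) (n k : nat) : R :=
  qpoch q q n / (qpoch q q k * qpoch q q (n - k)).

Definition ramanujanA (q z : R) : R :=
  Series (fun k => q ^ (k * k) / qpoch q q k * (- z) ^ k).

(* The right-hand side of the defining identity:
   sum_{k=0}^n [n k]_q q^{k(k-n)} (-1)^k v^{n-2k}
   (for k <= n: q^{k(k-n)} = 1/q^{k(n-k)}, v^{n-2k} = v^{n-k}/v^k). *)
Definition IMh_v (n : nat) (q : R) (v : C) : C :=
  sum_n (fun k : nat =>
    Cmult (RtoC (qbinom q n k / q ^ (k * (n - k)) * (-1) ^ k))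
          (Cdiv (pow_n v (n - k)) (pow_n v k))) n.

(* The Ismail-Masson polynomial h_n(x|q): its value at x is the above sum
   at any nonzero v with (v - v^{-1})/2 = x (such v always exists; the
   value does not depend on the choice since the sum is invariant under
   v |-> -1/v). *)
Definition IMh (n : nat) (q : R) (x : C) : C :=
  IMh_v n q (epsilon (inhabits (RtoC 1))
                     (fun v : C => v <> RtoC 0 /\ Cdiv (Cminus v (Cinv v)) (RtoC 2) = x)).

(* With w := q^(-nt) u the argument of h_n is (w - 1/w)/2, and every v with
   (v - 1/v)/2 = (w - 1/w)/2 is w or -1/w.  By the triangle inequality |h_n| is
   at most the positive sum  sum_k [n k]_q q^(-k(n-k)) r^(n-2k)  with r = |v|,
   which is invariant under r |-> 1/r, so we may take r = |w| = |u| q^(-nt).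
   Since [n k]_q <= 1/(q;q)_k, its k-th term is at most
   r^n q^(k^2)/(q;q)_k (q^(-n) r^(-2))^k, the k-th term of the positive series
   of A_q(-q^(-n) r^(-2)). *)

From Stdlib Require Import Reals Lra Lia ClassicalEpsilon.
From Coquelicot Require Import Coquelicot.
Open Scope R_scope.

Lemma qpoch_pos (q : R) (k : nat) : 0 < q < 1 -> 0 < qpoch q q k.
Proof.
  intros Hq; induction k as [|k IHk]; simpl; [lra|].
  assert (q * q ^ k < 1) by (apply (pow_lt_1_compat q (S k)); [lra|lia]).
  apply Rmult_lt_0_compat; lra.
Qed.

Lemma qpoch_add_le (q : R) (m k : nat) : 0 < q < 1 -> qpoch q q (m + k) <= qpoch q q m.
Proof.
  intros Hq; induction k as [|k IHk]; [rewrite Nat.add_0_r; lra|].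
  rewrite Nat.add_succ_r; simpl.
  pose proof (qpoch_pos q (m + k) Hq); pose proof (pow_lt q (m + k) ltac:(lra)).
  assert (0 <= qpoch q q (m + k) * (q * q ^ (m + k))) by (apply Rmult_le_pos; nra).
  nra.
Qed.

Lemma qbinom_pos (q : R) (n k : nat) : 0 < q < 1 -> 0 < qbinom q n k.
Proof.
  intros Hq; unfold qbinom.
  pose proof (qpoch_pos q n Hq); pose proof (qpoch_pos q k Hq); pose proof (qpoch_pos q (n - k) Hq).
  apply Rdiv_lt_0_compat; [|apply Rmult_lt_0_compat]; assumption.
Qed.

Lemma qbinom_sym (q : R) (n k : nat) : (k <= n)%nat -> qbinom q n (n - k) = qbinom q n k.
Proof.
  intros Hk; unfold qbinom; replace (n - (n - k))%nat with k by lia.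
  now rewrite Rmult_comm.
Qed.

Lemma qbinom_le_inv_qpoch (q : R) (k m : nat) : 0 < q < 1 ->
  qbinom q (k + m) k <= / qpoch q q k.
Proof.
  intros Hq; unfold qbinom; replace (k + m - k)%nat with m by lia.
  pose proof (qpoch_pos q k Hq); pose proof (qpoch_pos q m Hq).
  rewrite Nat.add_comm; pose proof (qpoch_add_le q m k Hq).
  replace (qpoch q q (m + k) / (qpoch q q k * qpoch q q m))
    with (/ qpoch q q k * (qpoch q q (m + k) / qpoch q q m)) by (field; lra).
  rewrite <- (Rmult_1_r (/ qpoch q q k)) at 2.
  apply Rmult_le_compat_l; [apply Rlt_le, Rinv_0_lt_compat; lra|].
  apply (Rmult_le_reg_r (qpoch q q m)); [lra|].
  unfold Rdiv; rewrite Rmult_assoc, Rinv_l; lra.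
Qed.

Lemma Cmod_pow_n (v : C) (k : nat) : Cmod (pow_n v k) = Cmod v ^ k.
Proof.
  induction k as [|k IHk]; simpl; [apply Cmod_1|].
  change (Cmod (v * pow_n v k)%C = Cmod v * Cmod v ^ k).
  now rewrite Cmod_mult, IHk.
Qed.

Lemma pow_n_neq_0 (v : C) (k : nat) : v <> RtoC 0 -> pow_n (K := C_Ring) v k <> RtoC 0.
Proof.
  intros Hv E; apply Cmod_gt_0 in Hv.
  pose proof (pow_lt _ k Hv) as Hpos.
  rewrite <- Cmod_pow_n, E, Cmod_0 in Hpos; lra.
Qed.

Definition IMh_majorant (n : nat) (q r : R) : R :=
  sum_n (fun k => qbinom q n k / q ^ (k * (n - k)) * (r ^ (n - k) / r ^ k)) n.

Lemma Cmod_IMh_v_le (n : nat) (q : R) (v : C) : 0 < q < 1 -> v <> RtoC 0 ->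
  Cmod (IMh_v n q v) <= IMh_majorant n q (Cmod v).
Proof.
  intros Hq Hv; unfold IMh_v, IMh_majorant, sum_n; rewrite Cmod_norm.
  eapply Rle_trans; [apply (@norm_sum_n_m R_AbsRing C_R_NormedModule)|].
  apply sum_n_m_le; intros k; rewrite <- Cmod_norm.
  rewrite Cmod_mult, Cmod_R, Cmod_div, !Cmod_pow_n by now apply pow_n_neq_0.
  rewrite Rabs_mult, <- RPow_abs, Rabs_m1, pow1, Rmult_1_r, Rabs_pos_eq; [lra|].
  apply Rlt_le, Rdiv_lt_0_compat; [now apply qbinom_pos | apply pow_lt; lra].
Qed.

Lemma IMh_majorant_inv (n : nat) (q r : R) : 0 < r ->
  IMh_majorant n q (/ r) = IMh_majorant n q r.
Proof.
  intros Hr; unfold IMh_majorant; rewrite !sum_n_Reals, <- sum_f_R0_skip.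
  apply sum_eq; intros k Hk.
  rewrite qbinom_sym by exact Hk.
  replace (n - (n - k))%nat with k by lia; rewrite (Nat.mul_comm (n - k) k), !pow_inv.
  f_equal; field; split; apply pow_nonzero; lra.
Qed.

Definition ramanujan_term (q a : R) (k : nat) : R := q ^ (k * k) / qpoch q q k * a ^ k.

Lemma ramanujanA_opp (q a : R) : ramanujanA q (- a) = Series (ramanujan_term q a).
Proof. apply Series_ext; intros k; now rewrite Ropp_involutive. Qed.

Lemma ramanujan_term_pos (q a : R) (k : nat) : 0 < q < 1 -> 0 < a -> 0 < ramanujan_term q a k.
Proof.
  intros Hq Ha; unfold ramanujan_term; pose proof (qpoch_pos q k Hq).
  apply Rmult_lt_0_compat; [apply Rdiv_lt_0_compat|]; auto; apply pow_lt; lra.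
Qed.

Lemma ex_series_ramanujan_term (q a : R) : 0 < q < 1 -> 0 < a -> ex_series (ramanujan_term q a).
Proof.
  intros Hq Ha.
  assert (Hpos := fun k => ramanujan_term_pos q a k Hq Ha).
  apply ex_series_Rabs, (ex_series_DAlembert _ 0); [lra | intros k; apply Rgt_not_eq, Hpos|].
  apply (is_lim_seq_ext (fun k => q * q ^ k * q ^ k * a / (1 - q * q ^ k))).
  { intros k; rewrite Rabs_pos_eq by (apply Rlt_le, Rdiv_lt_0_compat; apply Hpos).
    pose proof (qpoch_pos q k Hq); pose proof (pow_lt q k ltac:(lra)).
    pose proof (pow_lt q (k * k) ltac:(lra)); pose proof (pow_lt a k Ha).
    assert (q * q ^ k < 1) by (apply (pow_lt_1_compat q (S k)); [lra|lia]).
    unfold ramanujan_term.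
    replace (S k * S k)%nat with (k * k + (1 + k + k))%nat by lia.
    rewrite !pow_add; simpl qpoch; simpl pow.
    field; repeat split; lra. }
  assert (Hgeom : is_lim_seq (fun k => q ^ k) 0)
    by (apply is_lim_seq_geom; rewrite Rabs_pos_eq; lra).
  replace 0 with (q * 0 * 0 * a / (1 - q * 0)) by (field; lra).
  apply is_lim_seq_div'; [| | lra].
  - repeat apply is_lim_seq_mult'; auto using is_lim_seq_const.
  - apply is_lim_seq_minus'; [apply is_lim_seq_const|].
    apply is_lim_seq_mult'; auto using is_lim_seq_const.
Qed.

Lemma sum_f_R0_le_Series (a : nat -> R) (n : nat) : (forall k, 0 <= a k) -> ex_series a ->
  sum_f_R0 a n <= Series a.
Proof.
  intros Ha Hex; rewrite (Series_incr_n a (S n)) by (lia || exact Hex).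
  simpl pred.
  enough (0 <= Series (fun k => a (S n + k)%nat)) by lra.
  replace 0 with (Series (fun k => 0 * a (S n + k)%nat)) by (rewrite Series_scal_l; ring).
  apply Series_le; [intros k; specialize (Ha (S n + k)%nat); lra|].
  now apply ex_series_incr_n.
Qed.

Lemma IMh_majorant_term_le (n k : nat) (q r : R) : 0 < q < 1 -> 0 < r -> (k <= n)%nat ->
  qbinom q n k / q ^ (k * (n - k)) * (r ^ (n - k) / r ^ k)
  <= r ^ n * ramanujan_term q (/ (q ^ n * r ^ 2)) k.
Proof.
  intros Hq Hr Hk; destruct (Nat.le_exists_sub k n Hk) as [m [-> _]].
  rewrite Nat.add_comm; replace (k + m - k)%nat with m by lia.
  assert (0 < q ^ (k * m)) by (apply pow_lt; lra).
  assert (0 < q ^ (k * k)) by (apply pow_lt; lra).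
  assert (0 < r ^ k) by (apply pow_lt; lra).
  assert (0 < r ^ m) by (apply pow_lt; lra).
  pose proof (qpoch_pos q k Hq).
  eapply Rle_trans.
  { apply Rmult_le_compat_r; [apply Rlt_le, Rdiv_lt_0_compat; assumption|].
    apply Rmult_le_compat_r; [apply Rlt_le, Rinv_0_lt_compat; assumption|].
    apply qbinom_le_inv_qpoch, Hq. }
  apply Req_le; unfold ramanujan_term.
  rewrite pow_inv, !Rpow_mult_distr, <- !pow_mult.
  replace ((k + m) * k)%nat with (k * k + k * m)%nat by lia.
  replace (2 * k)%nat with (k + k)%nat by lia.
  rewrite !pow_add; field; lra.
Qed.

Lemma IMh_majorant_le_ramanujanA (n : nat) (q r : R) : 0 < q < 1 -> 0 < r ->
  IMh_majorant n q r <= r ^ n * ramanujanA q (- / (q ^ n * r ^ 2)).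
Proof.
  intros Hq Hr.
  assert (Ha : 0 < / (q ^ n * r ^ 2))
    by (apply Rinv_0_lt_compat, Rmult_lt_0_compat; apply pow_lt; lra).
  rewrite ramanujanA_opp; unfold IMh_majorant; rewrite sum_n_Reals.
  eapply Rle_trans; [apply sum_Rle; intros k Hk; now apply IMh_majorant_term_le|].
  rewrite (sum_eq _ (fun k => ramanujan_term q (/ (q ^ n * r ^ 2)) k * r ^ n))
    by (intros; apply Rmult_comm).
  rewrite <- scal_sum.
  apply Rmult_le_compat_l; [apply pow_le; lra|].
  apply sum_f_R0_le_Series;
    [intros k; apply Rlt_le, ramanujan_term_pos | apply ex_series_ramanujan_term]; assumption.
Qed.

Lemma Cminus_Cinv_eq (v w : C) : v <> RtoC 0 -> w <> RtoC 0 ->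
  (v - / v = w - / w)%C -> v = w \/ v = (- / w)%C.
Proof.
  intros Hv Hw E.
  assert (Hprod : ((v - w) * (v * w + 1))%C = RtoC 0).
  { replace ((v - w) * (v * w + 1))%C with (v * w * ((v - / v) - (w - / w)))%C
      by (field; auto).
    rewrite E; ring. }
  destruct (Ceq_dec (v - w) 0) as [Hvw | Hvw]; [left | right].
  - replace v with (v - w + w)%C by ring; rewrite Hvw; ring.
  - assert (Hvw1 : (v * w + 1)%C = RtoC 0).
    { destruct (Ceq_dec (v * w + 1) 0) as [H | H]; [exact H|].
      exfalso; exact (Cmult_neq_0 _ _ Hvw H Hprod). }
    replace v with (/ w * (v * w + 1) - / w)%C by (field; assumption).
    rewrite Hvw1; ring.
Qed.

Lemma Cmod_IMh_le (n : nat) (q : R) (w : C) : 0 < q < 1 -> w <> RtoC 0 ->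
  Cmod (IMh n q ((w - / w) / RtoC 2)%C) <= IMh_majorant n q (Cmod w).
Proof.
  intros Hq Hw; unfold IMh.
  set (P := fun v : C => v <> RtoC 0 /\ ((v - / v) / RtoC 2)%C = ((w - / w) / RtoC 2)%C).
  destruct (epsilon_spec (inhabits (RtoC 1)) P (ex_intro P w (conj Hw eq_refl))) as [Hv E].
  set (v := epsilon (inhabits (RtoC 1)) P) in *.
  assert (H2 : RtoC 2 <> RtoC 0) by (intros H; injection H; lra).
  assert (E' : (v - / v = w - / w)%C).
  { replace (v - / v)%C with ((v - / v) / RtoC 2 * RtoC 2)%C by (field; auto).
    rewrite E; field; auto. }
  eapply Rle_trans; [apply Cmod_IMh_v_le; assumption|].
  destruct (Cminus_Cinv_eq v w Hv Hw E') as [-> | ->]; [lra|].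
  rewrite Cmod_opp, Cmod_inv, IMh_majorant_inv by (assumption || now apply Cmod_gt_0).
  lra.
Qed.

Lemma Cmod_IMh_le_ramanujanA (n : nat) (q : R) (w : C) : 0 < q < 1 -> w <> RtoC 0 ->
  Cmod (IMh n q ((w - / w) / RtoC 2)%C)
  <= Cmod w ^ n * ramanujanA q (- / (q ^ n * Cmod w ^ 2)).
Proof.
  intros Hq Hw; eapply Rle_trans; [now apply Cmod_IMh_le|].
  apply IMh_majorant_le_ramanujanA; [assumption | now apply Cmod_gt_0].
Qed.

Theorem mainTheorem1 (q t : R) (n : nat) (u : C) :
  0 < q < 1 -> 0 < t -> u <> RtoC 0 ->
  Cmod (IMh n q
          (Cdiv (Cminus (Cmult (RtoC (Rpower q (- (INR n * t)))) u)
                        (Cdiv (RtoC (Rpower q (INR n * t))) u))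
                (RtoC 2)))
  <= (Cmod u) ^ n / Rpower q (INR n * INR n * t)
     * ramanujanA q (- (Rpower q (INR n * (2 * t - 1)) / (Cmod u) ^ 2)).
Proof.
  intros Hq Ht Hu.
  set (P := Rpower q (INR n * t)).
  assert (HP : 0 < P) by apply exp_pos.
  assert (Hu' : 0 < Cmod u) by now apply Cmod_gt_0.
  set (w := (RtoC (/ P) * u)%C).
  assert (Hw : Cmod w = Cmod u / P).
  { unfold w; rewrite Cmod_mult, Cmod_R, Rabs_pos_eq; [field | apply Rlt_le, Rinv_0_lt_compat]; lra. }
  assert (Harg : (RtoC (Rpower q (- (INR n * t))) * u - RtoC P / u)%C = (w - / w)%C).
  { unfold w; rewrite Rpower_Ropp; fold P; rewrite RtoC_inv by lra; field.
    split; [intros E; injection E; lra | assumption]. }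
  assert (HPn : Rpower q (INR n * INR n * t) = P ^ n).
  { unfold P; rewrite <- Rpower_pow, Rpower_mult by apply exp_pos; f_equal; ring. }
  assert (HP2 : Rpower q (INR n * (2 * t - 1)) = P ^ 2 / q ^ n).
  { rewrite <- (Rpower_pow 2 P), <- (Rpower_pow n q) by lra.
    unfold P, Rdiv; rewrite Rpower_mult, <- Rpower_Ropp, <- Rpower_plus.
    f_equal; simpl INR; ring. }
  fold P; rewrite Harg, HPn, HP2.
  replace (Cmod u ^ n / P ^ n) with (Cmod w ^ n)
    by (rewrite Hw; unfold Rdiv; rewrite Rpow_mult_distr, pow_inv; reflexivity).
  replace (P ^ 2 / q ^ n / Cmod u ^ 2) with (/ (q ^ n * Cmod w ^ 2))
    by (rewrite Hw; field; repeat split; try lra; apply pow_nonzero; lra).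
  apply Cmod_IMh_le_ramanujanA; [assumption|].
  apply Cmod_gt_0; rewrite Hw; apply Rdiv_lt_0_compat; assumption.
Qed.
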